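(* Suppose there is a quantum algorithm $A_0$ making $q$ queries to $U$ and $U^\dagger$ which, for $U$ Haar-random on $\mathbb{C}^d$, has (expected over $U$) advantage $\varepsilon$ in breaking honest binding of the EPR commitment scheme, i.e. acting only on $\mathsf A\otimes\mathsf D$ on $\ket0_{\mathsf A}\ket{\psi^U_0}$ it produces $\rho_0$ with $\mathbb{E}_U\mathrm{tr}(\ket{\psi^U_1}\bra{\psi^U_1}\rho_0)\ge\varepsilon$. Then for every distribution $D$ over unitaries on $\mathbb{C}^d$ there is a quantum algorithm $A_1$ making $q$ queries to $V,V^\dagger$ which, for $V\sim D$, achieves the same advantage $\varepsilon$ against the scheme instantiated with $V$.
   Context: Registers $\mathsf D,\mathsf C$ are both $\mathbb{C}^d$, $\ket{\mathrm{EPR}}=d^{-1/2}\sum_x\ket x_{\mathsf D}\ket x_{\mathsf C}$. For a unitary $U$, the commitment states are $\ket{\psi^U_0}=\ket{\mathrm{EPR}}$ and $\ket{\psi^U_1}=(I_{\mathsf D}\otimes U)\ket{\mathrm{EPR}}$; the adversary has a private register $\mathsf A$ and may act only on $\mathsf A\otimes\mathsf D$, and $\rho_0$ denotes the resulting state on $\mathsf{DC}$ after tracing out $\mathsf A$. The lemma counts only queries to the oracle (no bound on other computation). *)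

From HB Require Import structures.
From mathcomp Require Import all_boot all_algebra.
From mathcomp Require Import all_classical all_reals all_analysis.
From mathcomp.real_closed Require Import complex mxtens.

Set Implicit Arguments.
Unset Strict Implicit.
Unset Printing Implicit Defensive.

Import GRing.Theory Num.Theory.
Local Open Scope ring_scope.
Local Open Scope classical_set_scope.

Section QDefs.
Variable R : realType.
Local Notation C := R[i].

Definition adj m n (M : 'M[C]_(m, n)) : 'M[C]_(n, m) :=
  \matrix_(i, j) (M j i)^*.

Definition unitary n (U : 'M[C]_n) : bool :=
  (U *m adj U == 1%:M) && (adj U *m U == 1%:M).

Definition ket n (x : 'I_n) : 'cV[C]_n := delta_mx x 0.

Definition invsqrt (n : nat) : C := real_complex R ((Num.sqrt (n%:R : R))^-1).

(* |EPR> on D (x) C, registers ordered D then C *)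
Definition EPR d : 'cV[C]_(d * d) :=
  invsqrt d *: \sum_(x < d) (ket x *t ket x).

(* |psi^U_1> = (I_D (x) U)|EPR> ;  |psi^U_0> = |EPR> *)
Definition psi1 d (U : 'M[C]_d) : 'cV[C]_(d * d) := (1%:M *t U) *m EPR d.

Definition ptrace1 m n (rho : 'M[C]_(m * n)) : 'M[C]_n :=
  \matrix_(j, k) \sum_(i < m) rho (mxtens_index (i, j)) (mxtens_index (i, k)).

(* A q-query algorithm acting on A (x) D, where the private register
   A = A' (x) Q has Hilbert space C^anc (x) C^d and queries to U or U^dagger
   act on the d-dimensional query register Q.  It consists of gates
   gate 0, ..., gate q (unitaries on A (x) D, dimension (anc*d)*d) interleaved
   with q queries; query k applies U^dagger if inv_query k, else U. *)
Record qalg (d q : nat) := QAlg {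
  anc : nat;
  gate : nat -> 'M[C]_(anc * d * d);
  inv_query : nat -> bool }.

Definition qalg_wf d q (A : qalg d q) : Prop :=
  (0 < anc A)%N /\ forall k, (k <= q)%N -> unitary (gate A k).

Definition query_op d q (A : qalg d q) (U : 'M[C]_d) (k : nat)
  : 'M[C]_(anc A * d * d) :=
  ((1%:M : 'M[C]_(anc A)) *t (if inv_query A k then adj U else U))
    *t (1%:M : 'M[C]_d).

Fixpoint run_upto d q (A : qalg d q) (U : 'M[C]_d) (k : nat)
  : 'M[C]_(anc A * d * d) :=
  match k with
  | 0 => gate A 0
  | k'.+1 => gate A k'.+1 *m query_op A U k' *m run_upto A U k'
  end.

Definition run d q (A : qalg d q) (U : 'M[C]_d) := run_upto A U q.

(* initial state |0>_A |EPR>_{DC}, registers ordered A', Q, D, C *)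
Definition init_state d (a : nat) : 'cV[C]_(a * d * d * d) :=
  \col_k (let: (adx, y) := mxtens_unindex k in
           let: (ad, x) := mxtens_unindex adx in
           if (val ad == 0%N) && (x == y) then invsqrt d else 0).

Definition final_state d q (A : qalg d q) (U : 'M[C]_d)
  : 'cV[C]_(anc A * d * d * d) :=
  (run A U *t (1%:M : 'M[C]_d)) *m
    init_state d (anc A).

(* rho_0 : state on D (x) C after tracing out A *)
Definition rho0 d q (A : qalg d q) (U : 'M[C]_d) : 'M[C]_(d * d) :=
  let Phi := final_state A U in
  ptrace1 (castmx (esym (mulnA (anc A * d) d d), esym (mulnA (anc A * d) d d))
            (Phi *m adj Phi)).

Definition advantage d q (A : qalg d q) (U : 'M[C]_d) : R :=
  complex.Re (\tr (psi1 U *m adj (psi1 U) *m rho0 A U)).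

End QDefs.

(* Borel sigma-algebra of C^(d x d) = R^(2 d^2): generated by the real and
   imaginary parts of the entries. *)
Section MatMeasurable.
Variable R : realType.
Variable n : nat.

Definition cmx_gen : set (set 'M[R[i]]_n) :=
  [set S | exists (i j : 'I_n) (B : set R), measurable B /\
     (S = (fun M : 'M[R[i]]_n => complex.Re (M i j)) @^-1` B \/
      S = (fun M : 'M[R[i]]_n => complex.Im (M i j)) @^-1` B)].

Definition CMat : Type := 'M[R[i]]_n.

HB.instance Definition _ := Choice.on CMat.
HB.instance Definition _ := isPointed.Build CMat (0 : 'M[R[i]]_n).

Definition cmx_measurable : set (set CMat) := <<s cmx_gen >>.

Lemma cmx_measurable0 : cmx_measurable set0.
Proof. exact: sigma_algebra0. Qed.
Lemma cmx_measurableC A : cmx_measurable A -> cmx_measurable (~` A).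
Proof. by move=> hA; rewrite /cmx_measurable -setTD; apply: sigma_algebraCD. Qed.
Lemma cmx_measurable_bigcup (F : (set CMat)^nat) :
  (forall k, cmx_measurable (F k)) -> cmx_measurable (\bigcup_k F k).
Proof. exact: sigma_algebra_bigcup. Qed.

HB.instance Definition _ := @isMeasurable.Build default_measure_display CMat
  cmx_measurable cmx_measurable0 cmx_measurableC cmx_measurable_bigcup.

End MatMeasurable.

Definition unitary_distribution (R : realType) (n : nat)
  (mu : probability (CMat R n) R) : Prop :=
  mu [set U : CMat R n | unitary U] = 1%E.

Definition haar (R : realType) (n : nat) (mu : probability (CMat R n) R) : Prop :=
  unitary_distribution mu /\
  forall W : 'M[R[i]]_n, unitary W ->
  forall B : set (CMat R n), measurable B ->
    mu ((fun U : CMat R n => (W *m U : CMat R n)) @^-1` B) = mu B /\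
    mu ((fun U : CMat R n => (U *m W : CMat R n)) @^-1` B) = mu B.

From HB Require Import structures.
From mathcomp Require Import all_boot all_algebra.
From mathcomp Require Import all_classical all_reals all_analysis.
From mathcomp.real_closed Require Import complex mxtens.
From mathcomp Require Import ring measurable_realfun.

(* Let A_W run A0 against the oracle V W: W is applied before every forward
   query, adj W after every inverse one, and finally conj W on D.  Since
   (I (x) V W)|EPR> = (W^T (x) V)|EPR>, A_W with oracle V has exactly the
   advantage of A0 with oracle V W.  By left invariance of the Haar measure,
   E_W adv(A0, V W) = E_U adv(A0, U) >= eps for every unitary V; exchanging the
   integrals over W and V ~ D (Tonelli) gives a unitary W with
   E_V adv(A0, V W) >= eps. *)

Set Implicit Arguments.
Unset Strict Implicit.
Unset Printing Implicit Defensive.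
Import order.Order.TTheory GRing.Theory Num.Theory.
Local Open Scope ring_scope.
Local Open Scope classical_set_scope.

Section Unitary.
Variable R : realType.
Local Notation C := R[i].

Lemma adjM m n p (M : 'M[C]_(m, n)) (N : 'M[C]_(n, p)) :
  adj (M *m N) = adj N *m adj M.
Proof.
apply/matrixP => i j; rewrite !mxE rmorph_sum; apply: eq_bigr => k _.
by rewrite !mxE rmorphM mulrC.
Qed.

Lemma adjK m n (M : 'M[C]_(m, n)) : adj (adj M) = M.
Proof. by apply/matrixP => i j; rewrite !mxE conjCK. Qed.

Lemma adj1 n : adj (1%:M : 'M[C]_n) = 1%:M.
Proof. by apply/matrixP => i j; rewrite !mxE eq_sym rmorph_nat. Qed.

Lemma adj_tens m n p q (M : 'M[C]_(m, n)) (N : 'M[C]_(p, q)) :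
  adj (M *t N) = adj M *t adj N.
Proof. by apply/matrixP => i j; rewrite !mxE rmorphM. Qed.

Lemma tensmx11 m n : (1%:M : 'M[C]_m) *t (1%:M : 'M[C]_n) = 1%:M.
Proof.
apply/matrixP => i j.
case: (mxtens_indexP i) => i1 i2; case: (mxtens_indexP j) => j1 j2.
rewrite tensmxE !mxE -natrM (inj_eq (can_inj (@mxtens_indexK m n))).
by rewrite xpair_eqE mulnb.
Qed.

Lemma unitaryM n (A B : 'M[C]_n) : unitary A -> unitary B -> unitary (A *m B).
Proof.
move=> /andP[/eqP A1 /eqP A2] /andP[/eqP B1 /eqP B2].
by rewrite /unitary !adjM !mulmxA -(mulmxA A) -(mulmxA (adj B)) B1 A2 !mulmx1 A1 B2 eqxx.
Qed.

Lemma unitary1 n : unitary (1%:M : 'M[C]_n).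
Proof. by rewrite /unitary adj1 mulmx1 eqxx. Qed.

Lemma unitary_tens m n (A : 'M[C]_m) (B : 'M[C]_n) :
  unitary A -> unitary B -> unitary (A *t B).
Proof.
move=> /andP[/eqP A1 /eqP A2] /andP[/eqP B1 /eqP B2].
by rewrite /unitary adj_tens !tensmx_mul A1 B1 A2 B2 tensmx11 eqxx.
Qed.

Lemma unitary_adj n (A : 'M[C]_n) : unitary A -> unitary (adj A).
Proof. by rewrite /unitary adjK andbC. Qed.

Lemma unitary_conj n (W : 'M[C]_n) : unitary W -> unitary (map_mx Num.conj W).
Proof.
have adj_conj : adj (map_mx Num.conj W) = W^T.
  by apply/matrixP => i j; rewrite !mxE conjCK.
move=> /andP[/eqP W1 /eqP W2].
have conj_adj : map_mx Num.conj W = (adj W)^T by apply/matrixP => i j; rewrite !mxE.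
by rewrite /unitary adj_conj conj_adj -!trmx_mul W1 W2 trmx1 eqxx.
Qed.

End Unitary.

Section IntegralBounds.
Local Open Scope ereal_scope.
Context d (T : measurableType d) (R : realType).

Lemma ge0_integral_lt_cst (mu : {measure set T -> \bar R}) (S : set T)
    (H : T -> \bar R) (c : R) :
  measurable S -> 0 < mu S -> mu S < +oo ->
  measurable_fun S H -> (forall x, S x -> 0 <= H x) ->
  (forall x, S x -> H x < c%:E) ->
  \int[mu]_(x in S) H x < c%:E * mu S.
Proof.
move=> mS muS0 muSoo mH H0 Hc; rewrite ltNge; apply/negP => geH.
(* [c - H] is positive on [S] but would have a nonpositive integral. *)
pose g x := c%:E - H x.
have g0 x : S x -> 0 < g x by move=> Sx; rewrite sube_gt0 Hc.
have mg : measurable_fun S g by apply: emeasurable_funB => //; exact: measurable_cst.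
have sum_gH : \int[mu]_(x in S) g x + \int[mu]_(x in S) H x = c%:E * mu S.
  rewrite -ge0_integralD //; last by move=> x Sx; exact/ltW/g0.
  rewrite -integral_cst //; apply: eq_integral => x; rewrite inE => Sx.
  rewrite /g subeK // ge0_fin_numE ?H0 //.
  exact: lt_trans (Hc x Sx) (ltry c).
have : (\int[mu]_(x in S) g x + \int[mu]_(x in S) H x) \is a fin_num.
  by rewrite sum_gH fin_numM // ge0_fin_numE ?measure_ge0.
rewrite fin_numD => /andP[_ finH].
have absg0 : \int[mu]_(x in S) `|g x| = 0.
  apply/eqP; rewrite eq_le integral_ge0 // andbT.
  rewrite (eq_integral g); last first.
    by move=> x; rewrite inE => Sx; rewrite gee0_abs // ltW // g0.
  by rewrite -(leeD2rE _ _ finH) add0e sum_gH.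
have [N [mN muN0 gN]] := (ae_eq_integral_abs mu mS mg).1 absg0.
have SN : S `<=` N.
  move=> x Sx; apply: gN => /= /(_ Sx) gx0.
  by have := g0 x Sx; rewrite gx0 ltxx.
by move: muS0; rewrite (subset_measure0 mS mN SN muN0) ltxx.
Qed.

Lemma probability_integral_setT (P : probability T R) (S : set T) (H : T -> \bar R) :
  measurable S -> P S = 1 -> measurable_fun setT H -> (forall x, 0 <= H x) ->
  \int[P]_x H x = \int[P]_(x in S) H x.
Proof.
move=> mS PS1 mH H0.
have PSC0 : P (~` S) = 0 by rewrite probability_setC // PS1 subee.
rewrite -(setUv S) ge0_integral_setU //; last by rewrite disj_set2E setICr.
- by rewrite [X in _ + X]null_set_integral ?adde0 //; [exact: measurableC | exact: measurable_funTS].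
- exact: measurableC.
- exact: measurable_funTS.
Qed.

Lemma probability_integral_ge (P : probability T R) (S : set T) (H : T -> \bar R) (eps : R) :
  measurable S -> P S = 1 -> measurable_fun setT H -> (forall x, 0 <= H x) ->
  (forall x, S x -> eps%:E <= H x) -> eps%:E <= \int[P]_x H x.
Proof.
move=> mS PS1 mH H0 epsH.
have [eps0|eps_gt0] := leP eps 0%R.
  by apply: le_trans (integral_ge0 _ _) => //; rewrite lee_fin.
rewrite (probability_integral_setT mS) // -[eps%:E]mule1 -PS1 -integral_cst //.
apply: ge0_le_integral => //; last exact: measurable_funTS.
by move=> x _; rewrite lee_fin ltW.
Qed.

Lemma probability_integral_exists_ge (P : probability T R) (S : set T)
    (H : T -> \bar R) (eps : R) :
  measurable S -> P S = 1 -> measurable_fun setT H -> (forall x, 0 <= H x) ->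
  eps%:E <= \int[P]_x H x -> exists2 x, S x & eps%:E <= H x.
Proof.
move=> mS PS1 mH H0 epsH; apply: contrapT => noS.
have Hlt x : S x -> H x < eps%:E.
  by move=> Sx; rewrite ltNge; apply/negP => epsHx; apply: noS; exists x.
have PS1' : (P : {measure set T -> \bar R}) S = 1 by [].
have := ge0_integral_lt_cst (mu := P) mS _ _ (measurable_funTS mH) (fun x _ => H0 x) Hlt.
rewrite PS1' mule1 -(probability_integral_setT mS) // => /(_ lte01 (ltry _)).
by move=> /(le_lt_trans epsH); rewrite ltxx.
Qed.

End IntegralBounds.

Section TonelliAveraging.
Local Open Scope ereal_scope.
Context d1 d2 (T1 : measurableType d1) (T2 : measurableType d2) (R : realType).

Lemma probability_fubini_exists_ge (P1 : probability T1 R)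
    (P2 : probability T2 R) (S1 : set T1) (S2 : set T2)
    (F : T1 * T2 -> \bar R) (eps : R) :
  measurable S1 -> P1 S1 = 1 -> measurable S2 -> P2 S2 = 1 ->
  measurable_fun setT F -> (forall z, 0 <= F z) ->
  (forall y, S2 y -> eps%:E <= \int[P1]_x F (x, y)) ->
  exists2 x, S1 x & eps%:E <= \int[P2]_y F (x, y).
Proof.
move=> mS1 P1S1 mS2 P2S2 mF F0 epsF.
apply: probability_integral_exists_ge mS1 P1S1 _ _ _.
- exact: measurable_fun_fubini_tonelli_F.
- by move=> x; apply: integral_ge0 => y _.
rewrite fubini_tonelli //; apply: probability_integral_ge mS2 P2S2 _ _ epsF.
- exact: measurable_fun_fubini_tonelli_G.
- by move=> y; apply: integral_ge0 => x _.
Qed.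

End TonelliAveraging.

Section ComplexMeasurable.
Variable R : realType.
Local Notation C := R[i].
Context d (T : measurableType d).

Definition cmeasurable (f : T -> C) :=
  measurable_fun setT (fun t => complex.Re (f t)) /\
  measurable_fun setT (fun t => complex.Im (f t)).

Lemma cmeasurable_cst c : cmeasurable (fun _ => c).
Proof. by split; exact: measurable_cst. Qed.

Lemma cmeasurableD f g : cmeasurable f -> cmeasurable g -> cmeasurable (fun t => f t + g t).
Proof.
move=> [f1 f2] [g1 g2]; split.
- have -> : (fun t => complex.Re (f t + g t)) =
      (fun t => complex.Re (f t)) \+ (fun t => complex.Re (g t)).
    by apply/funext => t /=; case: (f t) => ? ?; case: (g t).
  exact: measurable_funD.
- have -> : (fun t => complex.Im (f t + g t)) =
      (fun t => complex.Im (f t)) \+ (fun t => complex.Im (g t)).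
    by apply/funext => t /=; case: (f t) => ? ?; case: (g t).
  exact: measurable_funD.
Qed.

Lemma cmeasurableM f g : cmeasurable f -> cmeasurable g -> cmeasurable (fun t => f t * g t).
Proof.
move=> [f1 f2] [g1 g2]; split.
- have -> : (fun t => complex.Re (f t * g t)) =
      ((fun t => complex.Re (f t)) \* (fun t => complex.Re (g t))) \-
      ((fun t => complex.Im (f t)) \* (fun t => complex.Im (g t))).
    by apply/funext => t /=; case: (f t) => ? ?; case: (g t).
  by apply: measurable_funB; exact: measurable_funM.
- have -> : (fun t => complex.Im (f t * g t)) =
      ((fun t => complex.Re (f t)) \* (fun t => complex.Im (g t))) \+
      ((fun t => complex.Im (f t)) \* (fun t => complex.Re (g t))).
    by apply/funext => t /=; case: (f t) => ? ?; case: (g t).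
  by apply: measurable_funD; exact: measurable_funM.
Qed.

Lemma cmeasurable_conj f : cmeasurable f -> cmeasurable (fun t => (f t)^*).
Proof.
move=> [f1 f2]; split.
- have -> : (fun t => complex.Re (f t)^*) = (fun t => complex.Re (f t)).
    by apply/funext => t /=; case: (f t).
  exact: f1.
- have -> : (fun t => complex.Im (f t)^*) = \- (fun t => complex.Im (f t)).
    by apply/funext => t /=; case: (f t).
  exact: measurable_funN.
Qed.

Lemma cmeasurable_sum I (r : seq I) (P : pred I) (F : I -> T -> C) :
  (forall i, cmeasurable (F i)) -> cmeasurable (fun t => \sum_(i <- r | P i) F i t).
Proof.
move=> mF; rewrite -fct_sumE; apply: big_ind => //.
by move=> f g; exact: cmeasurableD.
Qed.

Definition mxmeasurable m n (F : T -> 'M[C]_(m, n)) :=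
  forall i j, cmeasurable (fun t => F t i j).

Lemma mxmeasurable_cst m n (M : 'M[C]_(m, n)) : mxmeasurable (fun _ => M).
Proof. by move=> i j; exact: cmeasurable_cst. Qed.

Lemma mxmeasurableM m n p (F : T -> 'M[C]_(m, n)) (G : T -> 'M[C]_(n, p)) :
  mxmeasurable F -> mxmeasurable G -> mxmeasurable (fun t => F t *m G t).
Proof.
move=> mF mG i j; under eq_fun do rewrite mxE.
by apply: cmeasurable_sum => k; exact: cmeasurableM.
Qed.

Lemma mxmeasurable_tens m n p q (F : T -> 'M[C]_(m, n)) (G : T -> 'M[C]_(p, q)) :
  mxmeasurable F -> mxmeasurable G -> mxmeasurable (fun t => F t *t G t).
Proof. by move=> mF mG i j; under eq_fun do rewrite mxE; exact: cmeasurableM. Qed.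

Lemma mxmeasurable_adj m n (F : T -> 'M[C]_(m, n)) :
  mxmeasurable F -> mxmeasurable (fun t => adj (F t)).
Proof. by move=> mF i j; under eq_fun do rewrite mxE; exact: cmeasurable_conj. Qed.

Lemma mxmeasurable_cast m n m' n' (e : (m = m') * (n = n')) (F : T -> 'M[C]_(m, n)) :
  mxmeasurable F -> mxmeasurable (fun t => castmx e (F t)).
Proof. by move=> mF i j; under eq_fun do rewrite castmxE. Qed.

Lemma measurable_mxeq m n (F G : T -> 'M[C]_(m, n)) :
  mxmeasurable F -> mxmeasurable G -> measurable_fun setT (fun t => F t == G t).
Proof.
move=> mF mG.
have band I (r : seq I) (P : I -> T -> bool) :
    (forall i, measurable_fun setT (P i)) ->
    measurable_fun setT (fun t => \big[andb/true]_(i <- r) P i t).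
  move=> mP; elim: r => [|a r IH].
    have -> : (fun t => \big[andb/true]_(i <- [::]) P i t) = cst true.
      by apply/funext => t; rewrite big_nil.
    exact: measurable_cst.
  have -> : (fun t => \big[andb/true]_(i <- a :: r) P i t) =
      (fun t => P a t && \big[andb/true]_(i <- r) P i t).
    by apply/funext => t; rewrite big_cons.
  exact: measurable_and.
have -> : (fun t => F t == G t) = (fun t =>
    \big[andb/true]_(i <- enum 'I_m) \big[andb/true]_(j <- enum 'I_n)
      ((complex.Re (F t i j) == complex.Re (G t i j)) &&
       (complex.Im (F t i j) == complex.Im (G t i j)))).
  apply/funext => t; rewrite big_all; apply/eqP/allP => [-> i _|FG].
    by rewrite big_all; apply/allP => j _; rewrite !eqxx.
  apply/matrixP => i j; move: (FG i (mem_enum _ i)).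
  rewrite big_all => /allP /(_ j (mem_enum _ j)) /andP[/eqP ReFG /eqP ImFG].
  by move: ReFG ImFG; case: (F t i j) => ? ?; case: (G t i j) => ? ? /= -> ->.
apply: (band) => i; apply: band => j.
have [F1 F2] := mF i j; have [G1 G2] := mG i j.
by apply: measurable_and; exact: measurable_fun_eqr.
Qed.

End ComplexMeasurable.

Section MatrixMeasurable.
Variables (R : realType) (n : nat).
Local Notation CM := (CMat R n).

Lemma mxmeasurable_id : mxmeasurable (fun U : CM => (U : 'M[R[i]]_n)).
Proof.
move=> i j; split => _ B mB; rewrite setTI; apply: sub_sigma_algebra.
- by exists i, j, B; split => //; left.
- by exists i, j, B; split => //; right.
Qed.

Lemma mxmeasurable_fst : mxmeasurable (fun p : CM * CM => (p.1 : 'M[R[i]]_n)).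
Proof.
move=> i j; have [Re_ij Im_ij] := mxmeasurable_id i j.
by split; [exact: measurableT_comp Re_ij measurable_fst | exact: measurableT_comp Im_ij measurable_fst].
Qed.

Lemma mxmeasurable_snd : mxmeasurable (fun p : CM * CM => (p.2 : 'M[R[i]]_n)).
Proof.
move=> i j; have [Re_ij Im_ij] := mxmeasurable_id i j.
by split; [exact: measurableT_comp Re_ij measurable_snd | exact: measurableT_comp Im_ij measurable_snd].
Qed.

Lemma measurable_mulmxl (V : 'M[R[i]]_n) :
  measurable_fun setT (fun U : CM => (V *m U : CM)).
Proof.
apply: (measurability (@cmx_gen R n : set (set CM))) => //.
move=> _ [S [i [j [B [mB [->|->]]]]]] <-.
- exact: (mxmeasurableM (mxmeasurable_cst _ V) mxmeasurable_id i j).1.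
- exact: (mxmeasurableM (mxmeasurable_cst _ V) mxmeasurable_id i j).2.
Qed.

Lemma measurable_unitary : measurable [set U : CM | unitary U].
Proof.
have mU : measurable_fun setT (fun U : CM => unitary U).
  have madj := mxmeasurable_adj mxmeasurable_id.
  apply: measurable_and; apply: measurable_mxeq; rewrite ?mxmeasurable_cst //.
  - exact: mxmeasurableM mxmeasurable_id madj.
  - exact: mxmeasurableM madj mxmeasurable_id.
by rewrite -[X in measurable X]setTI; exact: mU measurableT [set true] I.
Qed.

Local Open Scope ereal_scope.

Lemma haar_integral_mull (mu : probability CM R) (V : 'M[R[i]]_n)
    (f : CM -> \bar R) :
  haar mu -> unitary V -> measurable_fun setT f -> (forall U, 0 <= f U) ->
  \int[mu]_U f (V *m U) = \int[mu]_U f U.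
Proof.
move=> [_ mu_inv] uV mf f0.
have mV := measurable_mulmxl V.
transitivity (\int[pushforward mu (fun U : CM => (V *m U : CM))]_U f U).
  by rewrite ge0_integral_pushforward //; move=> U _.
apply: eq_measure_integral => B mB _.
by have [] := mu_inv V uV B mB.
Qed.

End MatrixMeasurable.

Section Advantage.
Variable R : realType.
Local Notation C := R[i].

Lemma sum_mxtens m n (F : 'I_(m * n) -> C) :
  \sum_(k < m * n) F k = \sum_(i < m) \sum_(j < n) F (mxtens_index (i, j)).
Proof.
rewrite pair_big /=; apply: reindex; exists (@mxtens_unindex m n) => k _.
- by case: k => i j; rewrite mxtens_indexK.
- by rewrite -surjective_pairing mxtens_unindexK.
Qed.

Lemma sum_delta n (F : 'I_n -> C) j : \sum_(i < n) (j == i)%:R * F i = F j.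
Proof.
rewrite (bigD1 j) //= eqxx mul1r big1 ?addr0 // => i /negbTE.
by rewrite eq_sym => ->; rewrite mul0r.
Qed.

Lemma EPRE d (x y : 'I_d) :
  EPR R d (mxtens_index (x, y)) 0 = invsqrt R d * (x == y)%:R.
Proof.
rewrite /EPR mxE summxE; congr (_ * _).
rewrite (eq_bigr (fun z => (x == z)%:R * (y == z)%:R)); first by rewrite sum_delta eq_sym.
move=> z _; rewrite !mxE mxtens_indexK /=.
by rewrite !(ord1 (Ordinal _)) !eqxx !andbT.
Qed.

Lemma psi1E d (U : 'M[C]_d) (x y : 'I_d) :
  psi1 U (mxtens_index (x, y)) 0 = invsqrt R d * U y x.
Proof.
rewrite /psi1 mxE sum_mxtens -(sum_delta (fun x' => invsqrt R d * U y x') x).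
apply: eq_bigr => x' _.
rewrite mulrA -(sum_delta (fun y' => (x == x')%:R * invsqrt R d * U y y') x').
apply: eq_bigr => y' _.
by rewrite tensmxE EPRE !mxE; ring.
Qed.

Definition amp m n (Phi : 'cV[C]_(m * n)) (psi : 'cV[C]_n) (i : 'I_m) : C :=
  \sum_(K < n) (psi K 0)^* * Phi (mxtens_index (i, K)) 0.

Lemma mxtrace_ptrace1 m n (Phi : 'cV[C]_(m * n)) (psi : 'cV[C]_n) :
  \tr (psi *m adj psi *m ptrace1 (Phi *m adj Phi)) =
  \sum_(i < m) amp Phi psi i * (amp Phi psi i)^*.
Proof.
pose a i K := (psi K 0)^* * Phi (mxtens_index (i, K)) 0.
transitivity (\sum_(J < n) \sum_(K < n) \sum_(i < m) a i K * (a i J)^*).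
  apply: eq_bigr => J _; rewrite mxE; apply: eq_bigr => K _.
  rewrite !mxE big_ord1 !mxE mulr_sumr; apply: eq_bigr => i _.
  by rewrite !mxE big_ord1 !mxE /a rmorphM /= conjCK; ring.
transitivity (\sum_(i < m) \sum_(K < n) \sum_(J < n) a i K * (a i J)^*).
  rewrite exchange_big /= (eq_bigr (fun K => \sum_(i < m) \sum_(J < n) a i K * (a i J)^*)).
    exact: exchange_big.
  by move=> K _; exact: exchange_big.
apply: eq_bigr => i _; rewrite /amp rmorph_sum mulr_suml.
by apply: eq_bigr => K _; rewrite mulr_sumr.
Qed.

Lemma castmx_outer m n (e : m = n) (Phi : 'cV[C]_m) :
  castmx (e, e) (Phi *m adj Phi) =
  castmx (e, erefl 1%N) Phi *m adj (castmx (e, erefl 1%N) Phi).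
Proof. by case: n / e. Qed.

Definition castPhi m d (Phi : 'cV[C]_(m * d * d)) : 'cV[C]_(m * (d * d)) :=
  castmx (esym (mulnA m d d), erefl 1%N) Phi.

Lemma ampE m d (Phi : 'cV[C]_(m * d * d)) (psi : 'cV[C]_(d * d)) i :
  amp (castPhi Phi) psi i = \sum_(x < d) \sum_(y < d)
    (psi (mxtens_index (x, y)) 0)^* * Phi (mxtens_index (mxtens_index (i, x), y)) 0.
Proof.
rewrite /amp sum_mxtens; apply: eq_bigr => x _; apply: eq_bigr => y _.
rewrite castmxE /=; congr (_ * Phi _ _); last exact: val_inj.
by apply: val_inj => /=; rewrite mulnDl -mulnA addnA.
Qed.

Lemma advantage_amp d q (A : qalg R d q) U :
  advantage A U = \sum_(i < anc A * d)
     complex.Re (amp (castPhi (final_state A U)) (psi1 U) i *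
                 (amp (castPhi (final_state A U)) (psi1 U) i)^*).
Proof.
rewrite /advantage /rho0 castmx_outer mxtrace_ptrace1.
exact: (raddf_sum (@complex.Re R : Rcomplex R -> R)).
Qed.

Lemma advantage_ge0 d q (A : qalg R d q) U : 0 <= advantage A U.
Proof.
rewrite advantage_amp; apply: sumr_ge0 => i _.
case: (amp _ _ i) => a b /=.
by rewrite mulrN opprK addr_ge0 // -expr2 sqr_ge0.
Qed.

Context dd (T : measurableType dd).

Lemma mxmeasurable_run_upto d q (A : qalg R d q) (F : T -> 'M[C]_d) k :
  mxmeasurable F -> mxmeasurable (fun t => run_upto A (F t) k).
Proof.
move=> mF; elim: k => [|k IH] /=; first exact: mxmeasurable_cst.
apply: mxmeasurableM IH; apply: mxmeasurableM; first exact: mxmeasurable_cst.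
apply: mxmeasurable_tens (mxmeasurable_cst _ _).
apply: mxmeasurable_tens; first exact: mxmeasurable_cst.
by case: inv_query => //; exact: mxmeasurable_adj.
Qed.

Lemma measurable_advantage d q (A : qalg R d q) (F : T -> 'M[C]_d) :
  mxmeasurable F -> measurable_fun setT (fun t => advantage A (F t)).
Proof.
move=> mF.
have mPhi : mxmeasurable (fun t => castPhi (final_state A (F t))).
  apply/mxmeasurable_cast/mxmeasurableM; last exact: mxmeasurable_cst.
  by apply: mxmeasurable_tens; [exact: mxmeasurable_run_upto | exact: mxmeasurable_cst].
have mpsi : mxmeasurable (fun t => psi1 (F t)).
  apply: mxmeasurableM; last exact: mxmeasurable_cst.
  by apply: mxmeasurable_tens; first exact: mxmeasurable_cst.
have mamp i : cmeasurable (fun t => amp (castPhi (final_state A (F t))) (psi1 (F t)) i).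
  by apply: cmeasurable_sum => K; apply: cmeasurableM (mPhi _ _); exact/cmeasurable_conj/mpsi.
under eq_fun do rewrite advantage_amp.
apply: measurable_sum => i.
by have [] := cmeasurableM (mamp i) (cmeasurable_conj (mamp i)).
Qed.

End Advantage.

Section Twist.
Variable R : realType.
Local Notation C := R[i].

Definition on_query a d (X : 'M[C]_d) : 'M[C]_(a * d * d) :=
  ((1%:M : 'M[C]_a) *t X) *t (1%:M : 'M[C]_d).

Lemma on_queryM a d (X Y : 'M[C]_d) : on_query a X *m on_query a Y = on_query a (X *m Y).
Proof. by rewrite /on_query !tensmx_mul !mulmx1. Qed.

Lemma unitary_on_query a d (X : 'M[C]_d) : unitary X -> unitary (on_query a X).
Proof. by move=> uX; rewrite /on_query !unitary_tens ?unitary1. Qed.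

Variables (d q : nat) (A : qalg R d q) (W : 'M[C]_d).

Definition twist_pre k : 'M[C]_(anc A * d * d) :=
  if (k < q)%N && ~~ inv_query A k then on_query (anc A) W else 1%:M.

(* The correction [adj W] after an inverse query [k] opens gate [k.+1]. *)
Definition twist_post k : 'M[C]_(anc A * d * d) :=
  if k is k'.+1 then (if inv_query A k' then on_query (anc A) (adj W) else 1%:M)
  else 1%:M.

Definition twist_out k : 'M[C]_(anc A * d * d) :=
  if k == q then (1%:M : 'M[C]_(anc A * d)) *t map_mx Num.conj W else 1%:M.

Definition twist : qalg R d q := @QAlg R d q (anc A)
  (fun k => twist_out k *m twist_pre k *m gate A k *m twist_post k) (inv_query A).

Lemma twist_wf : unitary W -> qalg_wf A -> qalg_wf twist.
Proof.
move=> uW [anc_gt0 u_gate]; split => // k le_kq /=.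
apply: unitaryM; [apply: unitaryM; [apply: unitaryM|]|].
- rewrite /twist_out; case: ifP => _; last exact: unitary1.
  by apply: unitary_tens; [exact: unitary1 | exact: unitary_conj].
- by rewrite /twist_pre; case: ifP => _; [exact: unitary_on_query | exact: unitary1].
- exact: u_gate.
- rewrite /twist_post; case: k {le_kq} => [|k]; first exact: unitary1.
  by case: ifP => _; [exact/unitary_on_query/unitary_adj | exact: unitary1].
Qed.

Lemma run_upto_twist V k : (k <= q)%N ->
  run_upto twist V k = twist_out k *m twist_pre k *m run_upto A (V *m W) k.
Proof.
elim: k => [|k IH] le_kq /=; first by rewrite mulmx1.
rewrite IH ?(ltnW le_kq) //.
have -> : twist_out k = 1%:M by rewrite /twist_out ltn_eqF.
rewrite mul1mx.
suff <- : twist_post k.+1 *m query_op twist V k *m twist_pre k =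
          query_op A (V *m W) k by rewrite !mulmxA.
rewrite /twist_post /twist_pre /query_op /= le_kq.
by case: inv_query; rewrite ?mulmx1 ?mul1mx on_queryM ?adjM.
Qed.

Lemma final_state_twist V :
  final_state twist V =
  on_query (anc A * d) (map_mx Num.conj W) *m final_state A (V *m W).
Proof.
rewrite /final_state /run run_upto_twist // /twist_pre ltnn /twist_out eqxx.
by rewrite mulmx1 mulmxA tensmx_mul mulmx1.
Qed.

Lemma on_query_mulE m (X : 'M[C]_d) (Phi : 'cV[C]_(m * d * d)) i x y :
  (on_query m X *m Phi) (mxtens_index (mxtens_index (i, x), y)) 0 =
  \sum_(x' < d) X x x' * Phi (mxtens_index (mxtens_index (i, x'), y)) 0.
Proof.
rewrite mxE sum_mxtens.
rewrite (eq_bigr (fun ix => ((1%:M : 'M[C]_m) *t X) (mxtens_index (i, x)) ix *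
    Phi (mxtens_index (ix, y)) 0)); last first.
  move=> ix _; rewrite -[RHS](sum_delta (fun y' => _ * Phi (mxtens_index (ix, y')) 0)).
  by apply: eq_bigr => y' _; rewrite tensmxE [1%:M y y']mxE; ring.
rewrite sum_mxtens -[RHS](sum_delta (fun i' =>
  \sum_(x' < d) X x x' * Phi (mxtens_index (mxtens_index (i', x'), y)) 0) i).
apply: eq_bigr => i' _; rewrite mulr_sumr; apply: eq_bigr => x' _.
by rewrite tensmxE [1%:M i i']mxE; ring.
Qed.

Lemma advantage_twist V : advantage twist V = advantage A (V *m W).
Proof.
rewrite !advantage_amp /=; apply: eq_bigr => i _.
suff -> : amp (castPhi (final_state twist V)) (psi1 V) i =
          amp (castPhi (final_state A (V *m W))) (psi1 (V *m W)) i by [].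
rewrite !ampE final_state_twist; set Phi := final_state A (V *m W).
pose c x' y x := (invsqrt R d * V y x)^* * ((W x x')^* *
  Phi (mxtens_index (mxtens_index (i, x'), y)) 0).
transitivity (\sum_(x < d) \sum_(y < d) \sum_(x' < d) c x' y x).
  apply: eq_bigr => x _; apply: eq_bigr => y _.
  by rewrite psi1E on_query_mulE mulr_sumr; apply: eq_bigr => x' _; rewrite mxE.
transitivity (\sum_(x' < d) \sum_(y < d) \sum_(x < d) c x' y x).
  rewrite (eq_bigr (fun x => \sum_(x' < d) \sum_(y < d) c x' y x)).
    by rewrite exchange_big; apply: eq_bigr => x' _; exact: exchange_big.
  by move=> x _; exact: exchange_big.
apply: eq_bigr => x' _; apply: eq_bigr => y _.
rewrite psi1E [(V *m W) y x']mxE mulr_sumr rmorph_sum mulr_suml.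
by apply: eq_bigr => x _; rewrite /c !rmorphM /=; ring.
Qed.

End Twist.

Local Open Scope ereal_scope.

Theorem mainTheorem17 (R : realType) (d q : nat) (eps : R)
  (haar_mu : probability (CMat R d) R) (A0 : qalg R d q) :
  (0 < d)%N ->
  haar haar_mu ->
  qalg_wf A0 ->
  \int[haar_mu]_(U in setT) (advantage A0 U)%:E >= eps%:E ->
  forall D : probability (CMat R d) R,
    unitary_distribution D ->
    exists A1 : qalg R d q,
      qalg_wf A1 /\
      \int[D]_(V in setT) (advantage A1 V)%:E >= eps%:E.
Proof.
move=> _ hmu wf0 adv0 D unitD.
pose F (WV : CMat R d * CMat R d) := (advantage A0 (WV.2 *m WV.1))%:E.
have mF : measurable_fun setT F.
  apply/measurable_EFinP/measurable_advantage.
  exact: mxmeasurableM (@mxmeasurable_snd R d) (@mxmeasurable_fst R d).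
have F0 WV : 0 <= F WV by rewrite lee_fin advantage_ge0.
have [W uW advW] : exists2 W : CMat R d, unitary W & eps%:E <= \int[D]_V F (W, V).
  apply: (probability_fubini_exists_ge (@measurable_unitary R d) hmu.1
    (@measurable_unitary R d) unitD mF F0) => V uV.
  rewrite /F /= (haar_integral_mull (f := fun U => (advantage A0 U)%:E) hmu uV).
  - exact: adv0.
  - by apply/measurable_EFinP/measurable_advantage; exact: mxmeasurable_id.
  - by move=> U; rewrite lee_fin advantage_ge0.
exists (twist A0 W); split; first exact: twist_wf.
under eq_integral do rewrite advantage_twist.
exact: advW.
Qed.
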